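(* Let $G=(V,E)$ be a connected undirected graph whose vertices are labelled by distinct integers, and orient each edge $\{u,v\}\in E$ from $u$ to $v$ if $v>u$ (and from $v$ to $u$ otherwise). Fix a vertex $k\in V$ and let $H=(V',E')$ be the undirected graph with vertex set $V'=\{s,t\}\cup\{v_b : v\in V,\ b\in\{0,1,2\}\}$ and edge set $$E'=\{(u_b,v_{(b+1)\bmod 3}) : (u,v)\text{ a directed edge of }G,\ b\in\{0,1,2\}\}\cup\{(s,k_0),(t,k_1)\}.$$ Then there is a path from $s$ to $t$ in $H$ if and only if $G$ contains a cycle such that the difference $D:=p-q$ between its number $p$ of clockwise edges and its number $q$ of anticlockwise edges satisfies $D\not\equiv 0 \pmod 3$. Furthermore, if $k$ is a vertex on such a cycle, then the path between $s$ and $t$ in $H$ can be taken to have length at most $2c+2$, where $c$ is the length of the cycle.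
   Context: Clockwise/anticlockwise edges of a cycle in the oriented graph $G$: choose a vertex $v$ of the cycle having at least one outgoing edge (with respect to the orientation above) that belongs to the cycle, and traverse the cycle from $v$ back to $v$ starting along such an outgoing edge. An edge of the cycle is clockwise if its orientation agrees with the direction of traversal and anticlockwise otherwise. (The condition $D\not\equiv 0 \pmod 3$ does not depend on the traversal direction.) *)

From mathcomp Require Import all_boot all_order all_algebra.
Set Implicit Arguments. Unset Strict Implicit. Unset Printing Implicit Defensive.
Import Order.TTheory GRing.Theory Num.Theory.

Section Defs.
Variables (T : finType) (e : rel T) (lab : T -> int).

Definition dedge (u v : T) : bool := e u v && (lab u < lab v)%R.

Definition is_cycle (c : seq T) : bool :=
  [&& 3 <= size c, uniq c & cycle e c].

(* D = (#clockwise edges) - (#anticlockwise edges) along the traversal c. *)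
Definition cycD (c : seq T) : int :=
  (\sum_(pr <- zip c (rot 1 c))
      (if (lab pr.1 < lab pr.2)%R then 1 else -1))%R.

(* Vertices of H: inl (v, b) is v_b, inr false is s, inr true is t. *)
Definition HV : finType := ((T * 'I_3) + bool)%type.
Definition Hs : HV := inr false.
Definition Ht : HV := inr true.

Definition hedge0 (k : T) (x y : HV) : bool :=
  match x, y with
  | inl (u, b), inl (v, b') => dedge u v && (nat_of_ord b' == (b.+1 %% 3))
  | inr false, inl (v, b) => (v == k) && (nat_of_ord b == 0)
  | inr true, inl (v, b) => (v == k) && (nat_of_ord b == 1)
  | _, _ => false
  end.

Definition hedge (k : T) : rel HV := fun x y => hedge0 k x y || hedge0 k y x.

Definition Hpath (k : T) (x y : HV) (p : seq HV) : bool :=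
  [&& path (hedge k) x p, uniq (x :: p) & last x p == y].
End Defs.

(* Count an edge of G as +1 when traversed along its orientation and -1
   otherwise, so that a cycle sums to D.  The vertex v_b of H records "at v,
   with accumulated sum b mod 3", and s, t hang off k_0, k_1; hence s-t walks
   in H are closed walks at k of sum 1 mod 3.  A closed walk of sum prime to 3
   contains a simple cycle of D prime to 3, because a repeated vertex splits it
   into two shorter closed walks whose sums add up.  Conversely a cycle with D
   prime to 3, joined to k and traversed once or twice, yields a closed walk at
   k of sum 1 mod 3, and shortening its lift gives an s-t path. *)

From mathcomp Require Import all_boot all_order all_algebra zify ring.
Import Order.TTheory GRing.Theory Num.Theory.

Set Implicit Arguments. Unset Strict Implicit. Unset Printing Implicit Defensive.

Local Open Scope ring_scope.

Section Orientation.
Variables (T : finType) (lab : T -> int).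

Definition stepD (u v : T) : int := if lab u < lab v then 1 else -1.

Fixpoint walkD (u : T) (q : seq T) : int :=
  if q is v :: q' then stepD u v + walkD v q' else 0.

Lemma walkD_cat u p q : walkD u (p ++ q) = walkD u p + walkD (last u p) q.
Proof. by elim: p u => [|v p IHp] u /=; rewrite ?add0r ?IHp ?addrA. Qed.

Lemma cycD_cons x q : cycD lab (x :: q) = walkD x (rcons q x).
Proof.
rewrite /cycD rot1_cons; move: {2 4}x => z.
elim: q x => [|y q IHq] x /=; first by rewrite big_cons big_nil.
by rewrite big_cons IHq.
Qed.

Lemma cycD_catC s1 s2 : cycD lab (s1 ++ s2) = cycD lab (s2 ++ s1).
Proof.
case: s1 => [|x s1]; first by rewrite cats0.
case: s2 => [|y s2]; first by rewrite cats0.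
rewrite /= !cycD_cons -!cats1 -!catA /= !walkD_cat /= !walkD_cat /=.
lia.
Qed.

Hypothesis lab_inj : injective lab.

Lemma stepD_antisym u v : u != v -> stepD u v + stepD v u = 0.
Proof.
move=> neq_uv; rewrite /stepD.
case: ltgtP => // /lab_inj eq_uv.
by rewrite eq_uv eqxx in neq_uv.
Qed.

End Orientation.

Lemma not_uniq_decomp (A : eqType) (s : seq A) : ~~ uniq s ->
  exists s1 s2 s3 y, s = s1 ++ y :: s2 ++ y :: s3.
Proof.
elim: s => [|x s IHs] //=; rewrite negb_and negbK.
case: (boolP (x \in s)) => [/splitPr[s2 s3] _ | _ /= /IHs[s1 [s2 [s3 [y ->]]]]].
  by exists [::], s2, s3, x.
by exists (x :: s1), s2, s3, y.
Qed.

Section ClosedWalks.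
Variables (T : finType) (e : rel T) (lab : T -> int).
Hypotheses (e_irr : irreflexive e) (lab_inj : injective lab).

Local Notation walkD := (walkD lab).

Lemma uniq_closed_walk_cycle x q :
  path e x (rcons q x) -> uniq (rcons q x) -> ~~ (3 %| walkD x (rcons q x))%Z ->
  is_cycle e (x :: q).
Proof.
rewrite rcons_uniq /is_cycle => walk_q /andP[xNq uniq_q] D_q.
rewrite /= walk_q xNq uniq_q !andbT.
case: q walk_q xNq {uniq_q} D_q => [|y [|z q]] //=; first by rewrite e_irr.
rewrite inE addr0 => _ neq_xy.
by rewrite stepD_antisym ?dvdz0 // eq_sym.
Qed.

Lemma closed_walk_cycle x p :
  path e x p -> last x p = x -> ~~ (3 %| walkD x p)%Z ->
  exists c, is_cycle e c /\ ~~ (3 %| cycD lab c)%Z.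
Proof.
have [n] := ubnP (size p); elim: n x p => // n IHn x p /ltnSE size_p.
move=> walk_p last_p D_p.
have [uniq_p | /not_uniq_decomp[p1 [p2 [p3 [y def_p]]]]] := boolP (uniq p).
  case/lastP: p last_p walk_p D_p uniq_p {size_p} => [|q z] //.
  rewrite last_rcons => -> walk_q D_q uniq_q.
  exists (x :: q); split; first exact: uniq_closed_walk_cycle.
  by rewrite cycD_cons.
move: walk_p last_p D_p size_p; rewrite {p}def_p.
rewrite !(cat_path, last_cat, walkD_cat, size_cat) /=.
rewrite !(cat_path, last_cat, walkD_cat, size_cat) /= => /and5P[walk1 e1y walk2 e2y walk3] last3 D_p size_p.
have [D_out | D_out] := boolP (3 %| walkD x (p1 ++ y :: p3))%Z.
  apply: (IHn y (rcons p2 y)).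
  - by rewrite size_rcons; lia.
  - by rewrite rcons_path walk2 e2y.
  - by rewrite last_rcons.
  - by move: D_out D_p; rewrite -cats1 walkD_cat walkD_cat /=; lia.
apply: (IHn x (p1 ++ y :: p3)) => //.
- by rewrite size_cat /=; lia.
- by rewrite cat_path walk1 /= e1y.
- by rewrite last_cat.
Qed.

End ClosedWalks.

Lemma exists_ord3_congr (z : int) : exists b : 'I_3, (3 %| (b : nat)%:Z - z)%Z.
Proof. by exists (inZp `|(z %% 3)%Z|%N) => /=; lia. Qed.

Lemma dvdz_chain (d a b c s t : int) :
  (d %| b - a - s)%Z -> (d %| c - b - t)%Z -> (d %| c - a - (s + t))%Z.
Proof.
move=> dvd_s dvd_t.
have -> : c - a - (s + t) = (b - a - s) + (c - b - t) by ring.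
exact: rpredD.
Qed.

Section Cover.
Variables (T : finType) (e : rel T) (lab : T -> int) (k : T).
Hypotheses (e_sym : symmetric e) (e_irr : irreflexive e) (lab_inj : injective lab).

Local Notation H := (hedge e lab k).
Local Notation walkD := (walkD lab).
Local Notation stepD := (stepD lab).

Lemma hedge_inl u b v b' :
  H (inl (u, b)) (inl (v, b')) = e u v && (3 %| (b' : nat)%:Z - (b : nat)%:Z - stepD u v)%Z.
Proof.
rewrite /hedge /= /dedge /stepD e_sym.
have [e_uv | _] := boolP (e v u); last by [].
have neq_uv : lab u != lab v.
  by apply: contraTneq e_uv => /lab_inj ->; rewrite e_irr.
have := ltn_ord b; have := ltn_ord b'.
by case: ltgtP neq_uv => //=; lia.
Qed.

Definition hvertex (x : HV T) : T := if x is inl (v, _) then v else k.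

Definition hlayer (x : HV T) : int :=
  match x with inl (_, b) => (b : nat)%:Z | inr c => (c : nat)%:Z end.

Lemma hedge_project x y : H x y ->
  (hvertex x = hvertex y /\ hlayer x = hlayer y) \/
  (e (hvertex x) (hvertex y) /\
   (3 %| hlayer y - hlayer x - stepD (hvertex x) (hvertex y))%Z).
Proof.
case: x => [[u b]|c]; case: y => [[v b']|c'] //.
- by rewrite hedge_inl => /andP[e_uv D_uv]; right.
- by rewrite /hedge /=; case: c' => /andP[/eqP-> /eqP->]; left.
- by rewrite /hedge /= orbF; case: c => /andP[/eqP-> /eqP->]; left.
- by case: c; case: c'.
Qed.

Lemma Hwalk_project x p : path H x p ->
  exists q, [/\ path e (hvertex x) q, last (hvertex x) q = hvertex (last x p) &
    (3 %| hlayer (last x p) - hlayer x - walkD (hvertex x) q)%Z].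
Proof.
elim: p x => [|y p IHp] x /=.
  by move=> _; exists [::]; rewrite subrr dvdz0.
case/andP=> /hedge_project[[eq_v eq_l] | [e_xy D_xy]] /IHp[q [walk_q last_q D_q]].
  by exists q; rewrite eq_v eq_l.
exists (hvertex y :: q) => /=; split=> //; first by rewrite e_xy.
exact: dvdz_chain D_xy D_q.
Qed.

Lemma walk_lift u b q : path e u q ->
  exists p (b' : 'I_3), [/\ path H (inl (u, b)) p, size p = size q,
    last (inl (u, b)) p = inl (last u q, b') &
    (3 %| (b' : nat)%:Z - (b : nat)%:Z - walkD u q)%Z].
Proof.
elim: q u b => [|v q IHq] u b /=.
  by move=> _; exists [::], b; rewrite subrr dvdz0.
case/andP=> e_uv /IHq IH.
have [b1 D_uv] := exists_ord3_congr ((b : nat)%:Z + stepD u v).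
have [p [b' [walk_p size_p last_p D_p]]] := IH b1.
have D_uv' : (3 %| (b1 : nat)%:Z - (b : nat)%:Z - stepD u v)%Z by move: D_uv; lia.
exists (inl (v, b1) :: p), b'; split=> /=; rewrite ?size_p //.
  by rewrite hedge_inl e_uv D_uv'.
exact: dvdz_chain D_uv' D_p.
Qed.

Lemma lift_closed_walk W : path e k W -> last k W = k -> (3 %| walkD k W - 1)%Z ->
  exists p, Hpath e lab k (Hs T) (Ht T) p /\ (size p <= size W + 2)%N.
Proof.
move=> walk_W last_W D_W.
have [p [b' [walk_p size_p last_p D_p]]] := walk_lift ord0 walk_W.
have b'_1 : (b' : nat) = 1%N by have := ltn_ord b'; move: D_p D_W => /=; lia.
set w := inl (k, ord0) :: rcons p (Ht T).
have walk_w : path H (Hs T) w.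
  by rewrite /= rcons_path walk_p last_p last_W /hedge /= eqxx b'_1.
have size_w : (size w <= size W + 2)%N by rewrite /= size_rcons size_p; lia.
have last_w : last (Hs T) w = Ht T by rewrite /= last_rcons.
case: (shortenP walk_w) last_w => p' walk_p' uniq_p' sub_p' last_p'.
exists p'; split; first by rewrite /Hpath walk_p' uniq_p' last_p' eqxx.
apply: leq_trans size_w; apply: uniq_leq_size sub_p'.
by case/andP: uniq_p'.
Qed.

(* Going once or twice around the walk brings its sum to 1 mod 3. *)
Lemma closed_walk_Hpath L : path e k L -> last k L = k -> ~~ (3 %| walkD k L)%Z ->
  exists p, Hpath e lab k (Hs T) (Ht T) p /\ (size p <= 2 * size L + 2)%N.
Proof.
move=> walk_L last_L D_L.
have [W [walk_W last_W size_W] D_W] : exists2 W,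
    [/\ path e k W, last k W = k & (size W <= 2 * size L)%N] & (3 %| walkD k W - 1)%Z.
  have [D1 | D2] : (3 %| walkD k L - 1)%Z \/ (3 %| walkD k L * 2 - 1)%Z by lia.
    by exists L; rewrite ?leq_pmull.
  exists (L ++ L); last by rewrite walkD_cat last_L; move: D2; lia.
  by rewrite cat_path last_cat size_cat walk_L last_L; split=> //; lia.
have [p [Hp size_p]] := lift_closed_walk walk_W last_W D_W.
by exists p; split=> //; apply: leq_trans size_p _; rewrite leq_add2r.
Qed.

Lemma Hpath_cycle p : Hpath e lab k (Hs T) (Ht T) p ->
  exists c, is_cycle e c /\ ~~ (3 %| cycD lab c)%Z.
Proof.
case/and3P=> walk_p _ /eqP last_p.
have [q [walk_q last_q D_q]] := Hwalk_project walk_p.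
apply: (closed_walk_cycle e_irr lab_inj walk_q); first by rewrite last_q last_p.
by move: D_q; rewrite last_p /=; lia.
Qed.

Lemma cycle_Hpath c : (forall x y : T, connect e x y) ->
  is_cycle e c -> ~~ (3 %| cycD lab c)%Z ->
  exists p, Hpath e lab k (Hs T) (Ht T) p.
Proof.
case: c => [|x q] conn; first by [].
move=> c_cycle; rewrite cycD_cons => D_L.
have walk_L : path e x (rcons q x) by case/and3P: c_cycle.
have last_L : last x (rcons q x) = x by rewrite last_rcons.
have /connectP[p1 walk1 last1] := conn k x.
have /connectP[p2 walk2 last2] := conn x k.
pose K0 := p1 ++ p2; pose K1 := p1 ++ rcons q x ++ p2.
have walk_K0 : path e k K0 by rewrite cat_path walk1 -last1 walk2.
have walk_K1 : path e k K1 by rewrite !cat_path walk1 -last1 walk_L last_L walk2.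
have last_K0 : last k K0 = k by rewrite last_cat -last1 -last2.
have last_K1 : last k K1 = k by rewrite !last_cat -last1 last_L -last2.
have D_K1 : walkD k K1 = walkD k K0 + walkD x (rcons q x).
  by rewrite !walkD_cat -last1 last_L; lia.
have [D_K0 | D_K0] := boolP (3 %| walkD k K0)%Z.
  have [|p [Hp _]] := closed_walk_Hpath walk_K1 last_K1; last by exists p.
  by rewrite D_K1; move: D_K0 D_L; lia.
by have [p [Hp _]] := closed_walk_Hpath walk_K0 last_K0 D_K0; exists p.
Qed.

Lemma cycle_through_Hpath c : is_cycle e c -> ~~ (3 %| cycD lab c)%Z -> k \in c ->
  exists p, Hpath e lab k (Hs T) (Ht T) p /\ (size p <= 2 * size c + 2)%N.
Proof.
move=> c_cycle D_c /splitPr def_c; case: def_c c_cycle D_c => c1 c2.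
case/and3P=> _ _ c_cycle; rewrite cycD_catC cycD_cons => D_c.
have walk_L : path e k (rcons (c2 ++ c1) k).
  by rewrite -(rot_cycle (size c1)) rot_size_cat in c_cycle.
have [p [Hp size_p]] := closed_walk_Hpath walk_L (last_rcons _ _ _) D_c.
exists p; split=> //; move: size_p; rewrite size_rcons !size_cat /=; lia.
Qed.

End Cover.

Local Close Scope ring_scope.

Theorem lemma1 (T : finType) (e : rel T) (lab : T -> int) (k : T) :
  symmetric e -> irreflexive e -> injective lab ->
  (forall x y : T, connect e x y) ->
  ((exists p : seq (HV T), Hpath e lab k (Hs T) (Ht T) p) <->
     (exists c : seq T, is_cycle e c /\ ~~ (3 %| cycD lab c)%Z))
  /\
  (forall c : seq T, is_cycle e c -> ~~ (3 %| cycD lab c)%Z -> k \in c ->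
     exists p : seq (HV T),
       Hpath e lab k (Hs T) (Ht T) p /\ size p <= 2 * size c + 2).
Proof.
move=> e_sym e_irr lab_inj conn; split; last exact: cycle_through_Hpath.
split=> [[p /(Hpath_cycle e_sym e_irr lab_inj)] | [c [c_cycle D_c]]] //.
exact: cycle_Hpath c_cycle D_c.
Qed.
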